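(* Let $\Sigma$ be a ranked alphabet, $B$ a strong bimonoid and $\mathcal{A}$ a $(\Sigma,B)$-wta. If the Nerode $(\Sigma,B)$-algebra $\mathcal{N}(\mathcal{A})$ is finite, then for the crisp-deterministic wta $\mathrm{rel}(\mathcal{N}(\mathcal{A}))$ we have $[\![\mathcal{A}]\!]^{\mathrm{init}}=[\![\mathrm{rel}(\mathcal{N}(\mathcal{A}))]\!]^{\mathrm{init}}$.
   Context: Ranked alphabet $\Sigma$ ($\Sigma^{(0)}\ne\emptyset$), trees $T_\Sigma$; strong bimonoid $(B,\oplus,\otimes,\mathbb{0},\mathbb{1})$ (commutative monoid $(B,\oplus,\mathbb{0})$, monoid $(B,\otimes,\mathbb{1})$, $\mathbb{0}\ne\mathbb{1}$, $\mathbb{0}$ absorbing, no distributivity). $(\Sigma,B)$-wta $\mathcal{A}=(Q,\delta,F)$: $Q$ finite nonempty, $\delta_k:Q^k\times\Sigma^{(k)}\times Q\to B$, $F:Q\to B$. Vector algebra $\mathrm{V}(\mathcal{A})=(B^Q,\delta_{\mathcal{A}})$, $\delta_{\mathcal{A}}(\sigma)(v_1,\dots,v_k)_q=\bigoplus_{q_1,\dots,q_k}\big(\bigotimes_{i=1}^k(v_i)_{q_i}\big)\otimes\delta_k(q_1\dots q_k,\sigma,q)$; $h_{\mathrm{V}(\mathcal{A})}$ the unique homomorphism $T_\Sigma\to B^Q$; $[\![\mathcal{A}]\!]^{\mathrm{init}}(\xi)=\bigoplus_q h_{\mathrm{V}(\mathcal{A})}(\xi)_q\otimes F_q$. $\mathcal{A}$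 is crisp-deterministic if for all $k,\sigma\in\Sigma^{(k)},q_1,\dots,q_k$ there is a unique $q$ with $\delta_k(q_1\dots q_k,\sigma,q)=\mathbb{1}$ and $\delta_k(q_1\dots q_k,\sigma,q')=\mathbb{0}$ for $q'\ne q$. Nerode algebra $\mathcal{N}(\mathcal{A})=(Q_{\mathcal{N}},\theta_{\mathcal{N}},F_{\mathcal{N}})$: $(Q_{\mathcal{N}},\theta_{\mathcal{N}})$ is the smallest subalgebra of $\mathrm{V}(\mathcal{A})$ (equivalently $Q_{\mathcal{N}}=\mathrm{im}(h_{\mathrm{V}(\mathcal{A})})$ with restricted operations) and $(F_{\mathcal{N}})_v=\bigoplus_{q\in Q}v_q\otimes F_q$. It is finite if $Q_{\mathcal{N}}$ is finite. For a finite $(\Sigma,B)$-algebra $\mathcal{K}=(P,\theta,G)$ ($\Sigma$-algebra $(P,\theta)$, $G:P\to B$), $\mathrm{rel}(\mathcal{K})$ is the crisp-deterministic wta $(P,\delta',G)$ with $\delta'_k(p_1\dots p_k,\sigma,p)=\mathbb{1}$ if $\theta(\sigma)(p_1,\dots,p_k)=p$ and $\mathbb{0}$ otherwise. *)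

From HB Require Import structures.
From mathcomp Require Import all_boot all_order.
From mathcomp Require Import finmap.
From mathcomp Require Import boolp classical_sets cardinality.

Set Implicit Arguments.
Unset Strict Implicit.
Unset Printing Implicit Defensive.

Record strong_bimonoid := StrongBimonoid {
  sb_car :> Type;
  sb_add : sb_car -> sb_car -> sb_car;
  sb_mul : sb_car -> sb_car -> sb_car;
  sb_zero : sb_car;
  sb_one : sb_car;
  sb_addA : associative sb_add;
  sb_addC : commutative sb_add;
  sb_add0r : left_id sb_zero sb_add;
  sb_mulA : associative sb_mul;
  sb_mul1r : left_id sb_one sb_mul;
  sb_mulr1 : right_id sb_one sb_mul;
  sb_mul0r : left_zero sb_zero sb_mul;
  sb_mulr0 : right_zero sb_zero sb_mul;
  sb_zero_neq_one : sb_zero <> sb_one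
}.

Record ranked_alphabet := RankedAlphabet {
  ra_sym :> finType;
  rank : ra_sym -> nat;
  ra_nullary : exists s : ra_sym, rank s = 0
}.

Inductive tree (S : ranked_alphabet) : Type :=
  Node (s : S) of ('I_(rank s) -> tree S).

(* Weighted tree automata.  delta s qs q = delta_k(q_1..q_k, s, q)     *)
(* with k = rank s and qs i = q_(i+1).                                 *)
Record wta (S : ranked_alphabet) (B : strong_bimonoid) := Wta {
  wta_st : finType;
  wta_st_nonempty : 0 < #|wta_st|;
  wta_delta : forall s : S, ('I_(rank s) -> wta_st) -> wta_st -> B;
  wta_final : wta_st -> B
}.

Arguments wta_st {S B} w : rename.
Arguments wta_delta {S B} w s _ _ : rename.
Arguments wta_final {S B} w _ : rename.

Definition vec (Q : Type) (B : Type) := Q -> B.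
HB.instance Definition _ (Q B : Type) := gen_eqMixin (vec Q B).
HB.instance Definition _ (Q B : Type) := gen_choiceMixin (vec Q B).

Definition vdelta (S : ranked_alphabet) (B : strong_bimonoid) (A : wta S B)
    (s : S) (vs : 'I_(rank s) -> vec (wta_st A) B) : vec (wta_st A) B :=
  fun q =>
    \big[@sb_add B / @sb_zero B]_(qs : {ffun 'I_(rank s) -> wta_st A})
       @sb_mul B (\big[@sb_mul B / @sb_one B]_(i < rank s) vs i (qs i))
                (wta_delta A s qs q).

Arguments vdelta {S B} A s vs.

Fixpoint hV (S : ranked_alphabet) (B : strong_bimonoid) (A : wta S B)
    (t : tree S) : vec (wta_st A) B :=
  match t with
  | Node s ch => @vdelta S B A s (fun i => @hV S B A (ch i))
  end.

Arguments hV {S B} A t.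

Definition init_sem (S : ranked_alphabet) (B : strong_bimonoid) (A : wta S B)
    (t : tree S) : B :=
  \big[@sb_add B / @sb_zero B]_(q : wta_st A) @sb_mul B (hV A t q) (wta_final A q).

Record falg (S : ranked_alphabet) (B : strong_bimonoid) := FAlg {
  fa_car : finType;
  fa_op : forall s : S, ('I_(rank s) -> fa_car) -> fa_car;
  fa_fin : fa_car -> B
}.

Arguments fa_car {S B} f : rename.
Arguments fa_op {S B} f s _ : rename.
Arguments fa_fin {S B} f _ : rename.

Lemma falg_nonempty (S : ranked_alphabet) (B : strong_bimonoid) (K : falg S B) :
  0 < #|fa_car K|.
Proof.
case: (ra_nullary S) => s e.
have f : 'I_(rank s) -> fa_car K by rewrite e => -[].
by apply/card_gt0P; exists (fa_op K s f).
Qed.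

Definition rel_wta (S : ranked_alphabet) (B : strong_bimonoid) (K : falg S B) : wta S B :=
  {| wta_st := fa_car K;
     wta_st_nonempty := falg_nonempty K;
     wta_delta := fun s ps p => if fa_op K s ps == p then @sb_one B else @sb_zero B;
     wta_final := fa_fin K |}.

Definition nerode_carrier (S : ranked_alphabet) (B : strong_bimonoid) (A : wta S B)
  : {fset vec (wta_st A) B} := fset_set (range (hV A)).

Lemma nerode_closed (S : ranked_alphabet) (B : strong_bimonoid) (A : wta S B)
    (fin : finite_set (range (hV A))) (s : S)
    (ps : 'I_(rank s) -> nerode_carrier A) :
  vdelta A s (fun i => val (ps i)) \in nerode_carrier A.
Proof.
rewrite /nerode_carrier in_fset_set // inE.
have H : forall i, exists t, hV A t = val (ps i).
  move=> i; have := valP (ps i); rewrite /nerode_carrier in_fset_set // inE.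
  by case=> t _ <-; exists t.
have [f Hf] := fin_all_exists H.
exists (Node f) => //=.
by congr vdelta; apply: funext => i; rewrite Hf.
Qed.

Definition nerode (S : ranked_alphabet) (B : strong_bimonoid) (A : wta S B)
    (fin : finite_set (range (hV A))) : falg S B :=
  {| fa_car := nerode_carrier A;
     fa_op := fun s ps => FSetSub (nerode_closed fin ps);
     fa_fin := fun v => \big[@sb_add B / @sb_zero B]_(q : wta_st A)
                          @sb_mul B (val v q) (wta_final A q) |}.

(** A finite (Sigma,B)-algebra K, viewed as the crisp-deterministic wta
    rel(K), assigns to a tree t the weight vector that is the indicator of
    the value of t in K: the summand of a run through the children's values
    has weight 1, every other run contains a factor 0.  Hence
    [[rel(K)]](t) = F_K(t^K).  For the Nerode algebra the value of t is
    h_V(A)(t) itself, and F_N(h_V(A)(t)) is [[A]](t) by definition. *)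

From HB Require Import structures.
From mathcomp Require Import all_boot all_order.
From mathcomp Require Import finmap.
From mathcomp Require Import boolp classical_sets cardinality.

Set Implicit Arguments.
Unset Strict Implicit.
Unset Printing Implicit Defensive.

Lemma big_absorbing (R : Type) (idx z : R) (op : Monoid.law idx)
    (I : eqType) (r : seq I) (F : I -> R) (i : I) :
  left_zero z op -> right_zero z op -> i \in r -> F i = z ->
  \big[op/idx]_(j <- r) F j = z.
Proof.
move=> op0m opm0 + Fi; elim: r => // j r IHr.
rewrite inE big_cons => /orP[/eqP <-|/IHr ->]; by rewrite ?Fi.
Qed.

HB.instance Definition _ (B : strong_bimonoid) :=
  Monoid.isComLaw.Build (sb_car B) (sb_zero B) (@sb_add B)
    (@sb_addA B) (@sb_addC B) (@sb_add0r B).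

HB.instance Definition _ (B : strong_bimonoid) :=
  Monoid.isLaw.Build (sb_car B) (sb_one B) (@sb_mul B)
    (@sb_mulA B) (@sb_mul1r B) (@sb_mulr1 B).

Section RelWta.
Variables (S : ranked_alphabet) (B : strong_bimonoid) (K : falg S B).

Fixpoint fa_eval (t : tree S) : fa_car K :=
  let: Node s ch := t in fa_op K s (fun i => fa_eval (ch i)).

Lemma hV_rel_wta t p :
  hV (rel_wta K) t p = if fa_eval t == p then sb_one B else sb_zero B.
Proof.
elim: t p => s ch IHch p /=; rewrite /vdelta.
pose run := [ffun i => fa_eval (ch i)].
rewrite (big_only1 run) //= => [|qs qs_neq_run _].
  rewrite big1 => [|i _]; last by rewrite IHch ffunE eqxx.
  have -> : fa_op K s run = fa_op K s (fun i => fa_eval (ch i)).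
    by congr (fa_op K s); apply: funext => i; rewrite ffunE.
  exact: sb_mul1r.
have [i qsi_neq] : exists i, fa_eval (ch i) != qs i.
  apply/existsP; apply: contraR qs_neq_run => /existsPn qs_eq.
  by apply/eqP/ffunP => i; rewrite ffunE; apply/esym/eqP/negPn/qs_eq.
by rewrite (big_absorbing (@sb_mul0r B) (@sb_mulr0 B) (mem_index_enum i))
  ?sb_mul0r // IHch (negbTE qsi_neq).
Qed.

Lemma init_sem_rel_wta t : init_sem (rel_wta K) t = fa_fin K (fa_eval t).
Proof.
rewrite /init_sem (big_only1 (fa_eval t)) //= => [|p p_neq _].
  by rewrite hV_rel_wta eqxx sb_mul1r.
by rewrite hV_rel_wta eq_sym (negbTE p_neq) sb_mul0r.
Qed.

End RelWta.

Lemma nerode_eval (S : ranked_alphabet) (B : strong_bimonoid) (A : wta S B)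
    (fin : finite_set (range (hV A))) (t : tree S) :
  val (fa_eval (nerode fin) t) = hV A t.
Proof.
elim: t => s ch IHch /=.
by congr vdelta; apply: funext => i; rewrite IHch.
Qed.

Theorem theorem6p3 (S : ranked_alphabet) (B : strong_bimonoid) (A : wta S B)
    (fin : finite_set (range (hV A))) :
  init_sem A = init_sem (rel_wta (nerode fin)).
Proof.
by apply: funext => t; rewrite init_sem_rel_wta /= nerode_eval.
Qed.
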